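(* The variety $CG=Mod(\{f(x_1,x_2)\approx f(x_2,x_1)\})$ of all commutative groupoids is stable.
   Context: Type $\tau=(2)$: one binary symbol $f$; terms over $X=\{x_1,x_2,\dots\}$, $W_\tau(X_n)$ terms in $x_1,\dots,x_n$. $\Sigma\models t\approx s$: every groupoid satisfying $\Sigma$ satisfies $t\approx s$; $Id(V)$ the identities of $V$. Positions $Pos(t)\subseteq\{1,2\}^*$ (root $\varepsilon$, children $p1,p2$), $sub_t(p)$ subterm at $p$, $\preceq$ prefix order, $t(p;r)$ replacement at $p$. A position $p\in Pos(t)$, $t\in W_\tau(X_n)$, is $\Sigma$-essential if some $\mathcal A\models\Sigma$ has the term operation of $t(p;x_{n+1})$ depending on $x_{n+1}$; $PEss(t,\Sigma)$ is the set of these. $SEss(t,\Sigma)=\{r\mid\Sigma\models r\approx sub_t(p)\text{ for some }p\in PEss(t,\Sigma)\}$. $P_r^t$ is the set of $\preceq$-minimal elements of $\{p\in Pos(t)\mid\Sigma\models sub_t(p)\approx r\}$; $t^\Sigma(r\leftarrow u)=t$ if $P_r^t=\emptyset$, else $t$ with subterms at all positions of $P_r^t$ replaced by $u$. A variety $V$ is stable if, with $\Sigma=Id(V)$: $t\approx s\in\Sigma$ and $r\in SEss(t,\Sigma)\cap SEss(s,\Sigma)$ imply $t^\Sigma(r\leftarrow u)\approx s^\Sigma(r\leftarrow u)\in\Sigma$ for all terms $u$. *)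

From Stdlib Require Import List Arith Classical ClassicalDescription.
Import ListNotations.

(* Terms over X = {x_1, x_2, ...}; Var k stands for x_(k+1). *)
Inductive term : Type :=
| Var : nat -> term
| F : term -> term -> term.

Fixpoint eval {A : Type} (op : A -> A -> A) (v : nat -> A) (t : term) : A :=
  match t with
  | Var k => v k
  | F a b => op (eval op v a) (eval op v b)
  end.

Definition identity := (term * term)%type.

Definition sat {A : Type} (op : A -> A -> A) (e : identity) : Prop :=
  forall v : nat -> A, eval op v (fst e) = eval op v (snd e).

Definition gclass := forall A : Type, (A -> A -> A) -> Prop.

Definition Mod (Sigma : identity -> Prop) : gclass :=
  fun A op => forall e, Sigma e -> sat op e.

Definition Id (V : gclass) : identity -> Prop :=
  fun e => forall (A : Type) (op : A -> A -> A), V A op -> sat op e.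

Definition entails (Sigma : identity -> Prop) (e : identity) : Prop :=
  forall (A : Type) (op : A -> A -> A), Mod Sigma A op -> sat op e.

Definition CG : gclass :=
  Mod (fun e => e = (F (Var 0) (Var 1), F (Var 1) (Var 0))).

Inductive dir : Type := d1 | d2.
Definition position := list dir.

Fixpoint sub (t : term) (p : position) : option term :=
  match p with
  | [] => Some t
  | d :: q =>
      match t with
      | Var _ => None
      | F a b => sub (match d with d1 => a | d2 => b end) q
      end
  end.

Definition Pos (t : term) (p : position) : Prop := sub t p <> None.

Fixpoint replace (t : term) (p : position) (r : term) : term :=
  match p with
  | [] => r
  | d :: q =>
      match t with
      | Var k => Var k
      | F a b =>
          match d with
          | d1 => F (replace a q r) b
          | d2 => F a (replace b q r)
          end
      end
  end.

(* least n with t ∈ W_tau(X_n): t uses only x_1..x_n *)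
Fixpoint nvars (t : term) : nat :=
  match t with
  | Var k => S k
  | F a b => Nat.max (nvars a) (nvars b)
  end.

Definition depends_on {A : Type} (op : A -> A -> A) (t : term) (k : nat) : Prop :=
  exists (v : nat -> A) (a : A),
    eval op v t <> eval op (fun i => if Nat.eqb i k then a else v i) t.

(* p ∈ PEss(t, Σ): with n = nvars t, x_{n+1} = Var n *)
Definition PEss (t : term) (Sigma : identity -> Prop) (p : position) : Prop :=
  Pos t p /\
  exists (A : Type) (op : A -> A -> A),
    Mod Sigma A op /\ depends_on op (replace t p (Var (nvars t))) (nvars t).

Definition SEss (t : term) (Sigma : identity -> Prop) (r : term) : Prop :=
  exists p q, PEss t Sigma p /\ sub t p = Some q /\ entails Sigma (r, q).

Definition prefix (p p' : position) : Prop := exists w, p' = p ++ w.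

Definition Pset (Sigma : identity -> Prop) (r t : term) (p : position) : Prop :=
  exists q, sub t p = Some q /\ entails Sigma (q, r).

Definition Pmin (Sigma : identity -> Prop) (r t : term) (p : position) : Prop :=
  Pset Sigma r t p /\ forall p', Pset Sigma r t p' -> prefix p' p -> p' = p.

(* simultaneous replacement by u of the subterms at all positions of P
   (P an antichain of positions, as P_r^t is) *)
Fixpoint replace_all (P : position -> Prop) (t u : term) : term :=
  if excluded_middle_informative (P []) then u
  else match t with
       | Var k => Var k
       | F a b => F (replace_all (fun p => P (d1 :: p)) a u)
                    (replace_all (fun p => P (d2 :: p)) b u)
       end.

Definition subst_r (Sigma : identity -> Prop) (t r u : term) : term :=
  replace_all (Pmin Sigma r t) t u.

Definition stable (V : gclass) : Prop :=
  forall t s : term, Id V (t, s) ->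
  forall r : term, SEss t (Id V) r -> SEss s (Id V) r ->
  forall u : term, Id V (subst_r (Id V) t r u, subst_r (Id V) s r u).

(* Terms modulo commutativity have canonical forms: fix a total
   order on terms and let [norm t] rebuild [t] bottom-up, putting the two
   arguments of every [F] in increasing order.  The terms with the induced
   operation form a commutative groupoid, so [CG ⊨ q ≈ r] holds exactly when
   [norm q = norm r].  Next, for an arbitrary set of identities Σ, the
   replacement [t^Σ(r <- u)] is the top-down replacement [top_replace]: stop
   and put [u] at the first subterm Σ-equivalent to [r], otherwise recurse.
   Finally, for Σ = Id(CG), top-down replacement maps CG-equivalent terms to
   CG-equivalent terms, because two terms with the same canonical form agree
   at the root and have pairwise CG-equivalent arguments, possibly swapped. *)

From Stdlib Require Import List Arith ClassicalDescription.
Import ListNotations.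

(* A lexicographic total order on terms, used to orient commutative pairs. *)
Fixpoint term_compare (a b : term) : comparison :=
  match a, b with
  | Var i, Var j => Nat.compare i j
  | Var _, F _ _ => Lt
  | F _ _, Var _ => Gt
  | F a1 a2, F b1 b2 =>
      match term_compare a1 b1 with Eq => term_compare a2 b2 | c => c end
  end.

Lemma term_compare_eq : forall a b, term_compare a b = Eq -> a = b.
Proof.
  induction a as [i | a1 IH1 a2 IH2]; destruct b as [j | b1 b2]; simpl;
    try discriminate.
  - intro H; apply Nat.compare_eq in H; subst; reflexivity.
  - destruct (term_compare a1 b1) eqn:E; try discriminate.
    intro H; rewrite (IH1 _ E), (IH2 _ H); reflexivity.
Qed.

Lemma term_compare_antisym : forall a b,
  term_compare b a = CompOpp (term_compare a b).
Proof.
  induction a as [i | a1 IH1 a2 IH2]; destruct b as [j | b1 b2]; simpl;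
    try reflexivity.
  - apply Nat.compare_antisym.
  - rewrite (IH1 b1); destruct (term_compare a1 b1); simpl; auto.
Qed.

Definition comm_op (a b : term) : term :=
  match term_compare a b with Gt => F b a | _ => F a b end.

Lemma comm_op_comm : forall a b, comm_op a b = comm_op b a.
Proof.
  intros a b; unfold comm_op; rewrite (term_compare_antisym a b).
  destruct (term_compare a b) eqn:E; simpl; auto.
  apply term_compare_eq in E; subst; reflexivity.
Qed.

Lemma comm_op_inj : forall a b c d, comm_op a b = comm_op c d ->
  (a = c /\ b = d) \/ (a = d /\ b = c).
Proof.
  intros a b c d; unfold comm_op.
  destruct (term_compare a b), (term_compare c d);
    intro H; injection H; intros; subst; auto.
Qed.

Lemma comm_op_not_var : forall a b k, comm_op a b <> Var k.
Proof. intros a b k; unfold comm_op; destruct (term_compare a b); discriminate. Qed.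

Definition norm (t : term) : term := eval comm_op Var t.

Lemma norm_F : forall a b, norm (F a b) = comm_op (norm a) (norm b).
Proof. reflexivity. Qed.

Lemma norm_eq_var : forall s k, norm s = Var k -> s = Var k.
Proof.
  destruct s as [j | c d]; intros k H; [exact H |].
  rewrite norm_F in H; exfalso; exact (comm_op_not_var _ _ _ H).
Qed.

Lemma norm_eq_F : forall a b s, norm (F a b) = norm s ->
  exists c d, s = F c d /\
    ((norm a = norm c /\ norm b = norm d) \/ (norm a = norm d /\ norm b = norm c)).
Proof.
  intros a b [k | c d] H.
  - change (norm (Var k)) with (Var k) in H.
    apply norm_eq_var in H; discriminate.
  - exists c, d; split; [reflexivity |].
    rewrite !norm_F in H; exact (comm_op_inj _ _ _ _ H).
Qed.

Lemma CG_iff_comm : forall (A : Type) (o : A -> A -> A),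
  CG A o <-> (forall x y, o x y = o y x).
Proof.
  intros A o; split.
  - intros HCG x y.
    exact (HCG _ eq_refl (fun i => match i with 0 => x | _ => y end)).
  - intros Hc e He v; subst e; apply Hc.
Qed.

Lemma eval_norm : forall (A : Type) (o : A -> A -> A) (v : nat -> A),
  (forall x y, o x y = o y x) -> forall t, eval o v (norm t) = eval o v t.
Proof.
  intros A o v Hc t; induction t as [k | a IHa b IHb]; [reflexivity |].
  rewrite norm_F; unfold comm_op.
  destruct (term_compare (norm a) (norm b)); simpl; rewrite IHa, IHb; auto.
Qed.

Lemma Id_CG_iff : forall q r, Id CG (q, r) <-> norm q = norm r.
Proof.
  intros q r; split.
  - intro H; apply (H term comm_op), CG_iff_comm, comm_op_comm.
  - intros Hn A o HCG v; simpl.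
    pose proof (proj1 (CG_iff_comm A o) HCG) as Hcomm.
    rewrite <- (eval_norm _ _ v Hcomm q), <- (eval_norm _ _ v Hcomm r), Hn.
    reflexivity.
Qed.

Lemma entails_Id_CG : forall e, entails (Id CG) e <-> Id CG e.
Proof.
  intro e; split.
  - intros H A o HCG; apply H; intros e' He'; exact (He' A o HCG).
  - intros H A o HMod; apply HMod, H.
Qed.

Lemma entails_CG_iff : forall q r, entails (Id CG) (q, r) <-> norm q = norm r.
Proof. intros q r; rewrite entails_Id_CG; apply Id_CG_iff. Qed.

Fixpoint top_replace (Sigma : identity -> Prop) (r u t : term) : term :=
  if excluded_middle_informative (entails Sigma (t, r)) then u
  else match t with
       | Var k => Var k
       | F a b => F (top_replace Sigma r u a) (top_replace Sigma r u b)
       end.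

Lemma sub_nil : forall t, sub t [] = Some t.
Proof. destruct t; reflexivity. Qed.

Lemma Pmin_nil : forall Sigma r t, Pmin Sigma r t [] <-> entails Sigma (t, r).
Proof.
  intros Sigma r t; split.
  - intros [[q [Hq He]] _]; rewrite sub_nil in Hq; injection Hq as <-; exact He.
  - intro H; split.
    + exists t; split; [apply sub_nil | exact H].
    + intros p' _ [w Hw]; symmetry in Hw; apply app_eq_nil in Hw; apply Hw.
Qed.

Lemma Pmin_cons : forall Sigma r a b (d : dir) p,
  ~ entails Sigma (F a b, r) ->
  Pmin Sigma r (F a b) (d :: p) <->
  Pmin Sigma r (match d with d1 => a | d2 => b end) p.
Proof.
  intros Sigma r a b d p Hroot; split.
  - intros [HP Hmin]; split; [exact HP |].
    intros p' Hp' [w Hw].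
    assert (Heq : d :: p' = d :: p).
    { apply Hmin; [exact Hp' | exists w; rewrite Hw; reflexivity]. }
    injection Heq; auto.
  - intros [HP Hmin]; split; [exact HP |].
    intros [| d' p'] Hp' [w Hw].
    + exfalso; apply Hroot.
      destruct Hp' as [q [Hq He]]; injection Hq as <-; exact He.
    + injection Hw as <- Hw; f_equal; apply Hmin; [exact Hp' | exists w; exact Hw].
Qed.

(* Replacing at any set of positions with the same extension as the minimal
   positions of [t] is top-down replacement; generalized over the set so that
   the induction can pass to the arguments. *)
Lemma replace_all_Pmin : forall Sigma r u t (P : position -> Prop),
  (forall p, P p <-> Pmin Sigma r t p) ->
  replace_all P t u = top_replace Sigma r u t.
Proof.
  intros Sigma r u t; induction t as [k | a IHa b IHb]; intros P HP; simpl;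
    destruct (excluded_middle_informative (P [])) as [H | H];
    destruct (excluded_middle_informative (entails Sigma _)) as [E | E];
    try reflexivity;
    try (exfalso; apply E, Pmin_nil, HP, H);
    try (exfalso; apply H, HP, Pmin_nil, E).
  f_equal; [apply IHa | apply IHb]; intro p; rewrite HP;
    [exact (Pmin_cons _ _ _ _ d1 p E) | exact (Pmin_cons _ _ _ _ d2 p E)].
Qed.

Lemma subst_r_top_replace : forall Sigma t r u,
  subst_r Sigma t r u = top_replace Sigma r u t.
Proof. intros Sigma t r u; apply replace_all_Pmin; tauto. Qed.

Lemma top_replace_CG_respects : forall r u t s, norm t = norm s ->
  norm (top_replace (Id CG) r u t) = norm (top_replace (Id CG) r u s).
Proof.
  intros r u t; induction t as [k | a IHa b IHb]; intros s Hts.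
  - change (norm (Var k)) with (Var k) in Hts; symmetry in Hts.
    apply norm_eq_var in Hts; subst s; reflexivity.
  - destruct (norm_eq_F _ _ _ Hts) as (c & d & -> & Hargs).
    cbn [top_replace].
    destruct (excluded_middle_informative (entails _ (F a b, r))) as [Ht | Ht];
      destruct (excluded_middle_informative (entails _ (F c d, r))) as [Hs | Hs];
      rewrite ?entails_CG_iff in Ht, Hs; try reflexivity;
      try (exfalso; congruence).
    rewrite !norm_F.
    destruct Hargs as [[Hac Hbd] | [Had Hbc]].
    + rewrite (IHa _ Hac), (IHb _ Hbd); reflexivity.
    + rewrite (IHa _ Had), (IHb _ Hbc); apply comm_op_comm.
Qed.

Theorem theorem5p2 : stable CG.
Proof.
  intros t s Hts r _ _ u.
  rewrite !subst_r_top_replace.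
  apply Id_CG_iff, top_replace_CG_respects.
  exact (proj1 (Id_CG_iff t s) Hts).
Qed.
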